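(* Let $G=(V,E)$ be a connected graph with at least two vertices that contains neither the claw $K_{1,3}$ nor the path $P_6$ as an induced subgraph. Then for every $v\in V$: $v\in\mathrm{core}(G)$ if and only if $\gamma(G-v)>\gamma(G)$.
   Context: All graphs are finite, simple and undirected. The claw $K_{1,3}$ is the star with one center and three leaves; $P_6$ is the chordless path on six vertices. $\gamma(G)$ is the domination number; a minimum dominating set (mds) is a dominating set of size $\gamma(G)$; $\mathrm{core}(G)$ is the set of vertices belonging to every mds. $G-v$ is $G$ with $v$ deleted. *)

From mathcomp Require Import all_boot.
Set Implicit Arguments. Unset Strict Implicit. Unset Printing Implicit Defensive.

Definition simple_graph (T : finType) (e : rel T) : Prop :=
  symmetric e /\ irreflexive e.

Definition connected_graph (T : finType) (e : rel T) : Prop :=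
  forall x y : T, connect e x y.

Definition induced_sub (U : finType) (f : rel U) (T : finType) (e : rel T) : Prop :=
  exists phi : U -> T, injective phi /\ forall a b : U, e (phi a) (phi b) = f a b.

Definition claw_rel : rel 'I_4 :=
  fun a b => ((val a == 0) && (val b != 0)) || ((val b == 0) && (val a != 0)).

Definition p6_rel : rel 'I_6 :=
  fun a b => (val a == (val b).+1) || (val b == (val a).+1).

Definition dominates (T : finType) (e : rel T) (W D : {set T}) : bool :=
  (D \subset W) && [forall w in W, (w \in D) || [exists d in D, e w d]].

(* domination number of the graph induced on W: the minimum size of a dominating set.
   The default value #|W| is harmless since W itself always dominates W. *)
Definition dom_num (T : finType) (e : rel T) (W : {set T}) : nat :=
  \big[minn/#|W|]_(D : {set T} | dominates e W D) #|D|.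

Definition gamma (T : finType) (e : rel T) : nat := dom_num e [set: T].

Definition gamma_del (T : finType) (e : rel T) (v : T) : nat := dom_num e [set~ v].

Definition is_mds (T : finType) (e : rel T) (D : {set T}) : bool :=
  dominates e [set: T] D && (#|D| == gamma e).

Definition core (T : finType) (e : rel T) : {set T} :=
  [set v | [forall D : {set T}, is_mds e D ==> (v \in D)]].

(* The direction from right to left holds in every graph: a minimum dominating
   set avoiding v also dominates G - v.  Conversely, suppose v lies in every
   minimum dominating set but gamma(G - v) <= gamma(G) = k.  Then no dominating
   set of size at most k avoids v; write a minimum dominating set as A + v and
   let D' dominate G - v with |D'| <= k.  Exchanging one vertex of A or D' for
   one or two vertices near v gives sets of size at most k avoiding v, so each
   leaves some vertex undominated.  These vertices provide two non-adjacent
   neighbours x, y of v outside N[A], their dominators dx, dy in D', private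
   neighbours w, w' of dx, dy, and a neighbour a of dx in A.  Claw- and
   P6-freeness force w and w' to be adjacent to v and to a, and a last exchange
   of a for {x, w} or {w, w'} produces a claw. *)

From mathcomp Require Import all_boot all_order.
Set Implicit Arguments. Unset Strict Implicit. Unset Printing Implicit Defensive.
Import Order.TTheory.

Section DominationNumber.
Variables (T : finType) (e : rel T).

Lemma dominates_refl (W : {set T}) : dominates e W W.
Proof. by rewrite /dominates subxx; apply/forall_inP => w ->. Qed.

Lemma dom_num_le (W D : {set T}) : dominates e W D -> dom_num e W <= #|D|.
Proof. exact: (@bigmin_le_cond _ nat _ #|W| D (dominates e W) (fun D => #|D|)). Qed.

Lemma dom_num_attained (W : {set T}) :
  exists2 D, dominates e W D & #|D| = dom_num e W.
Proof.
have [D domD minD] := @eq_bigmin _ _ _ #|W| W (dominates e W) (fun D => #|D|)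
  (dominates_refl W) (fun D domD => subset_leq_card (proj1 (andP domD))).
by exists D => //; exact: esym minD.
Qed.

End DominationNumber.

Section Graph.
Variables (T : finType) (e : rel T).
Hypotheses (e_sym : symmetric e) (e_irr : irreflexive e).

Lemma adj_neq x y : e x y -> x != y.
Proof. by apply: contraTneq => ->; rewrite e_irr. Qed.

Lemma adj_nadj_neq x y z : e x z -> ~~ e y z -> x != y.
Proof. by move=> xz; apply: contraNneq => <-. Qed.

Definition claw_free : Prop := forall c a b d, e c a -> e c b -> e c d ->
  ~~ e a b -> ~~ e a d -> ~~ e b d -> a != b -> a != d -> b != d -> False.

Definition p6_free : Prop := forall p0 p1 p2 p3 p4 p5,
  e p0 p1 -> e p1 p2 -> e p2 p3 -> e p3 p4 -> e p4 p5 ->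
  ~~ e p0 p2 -> ~~ e p0 p3 -> ~~ e p0 p4 -> ~~ e p0 p5 -> ~~ e p1 p3 ->
  ~~ e p1 p4 -> ~~ e p1 p5 -> ~~ e p2 p4 -> ~~ e p2 p5 -> ~~ e p3 p5 -> False.

Lemma claw_freeP : ~ induced_sub claw_rel e -> claw_free.
Proof.
move=> noclaw c a b d ca cb cd ab ad bd nab nad nbd; apply: noclaw.
pose s := [:: c; a; b; d].
have s_uniq : uniq s.
  by rewrite /= !inE !negb_or nab nad nbd (adj_neq ca) (adj_neq cb) (adj_neq cd).
exists (fun i : 'I_4 => nth c s i); split.
  by move=> i j /eqP; rewrite nth_uniq // => /eqP /val_inj.
have E := (ca, cb, cd, negbTE ab, negbTE ad, negbTE bd).
move=> [[|[|[|[|i]]]] ?] [[|[|[|[|j]]]] ?] //=; rewrite /claw_rel /= ?e_irr //;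
  first [by rewrite E | by rewrite e_sym E].
Qed.

(* So an adjacency-preserving map from P6 is automatically injective. *)
Lemma p6_rel_twin_free (i j : 'I_6) : p6_rel i =1 p6_rel j -> i = j.
Proof.
move=> ij; apply: val_inj; have {}ij k (lt_k6 : k < 6) := ij (Ordinal lt_k6).
move: i j ij => [[|[|[|[|[|[|i]]]]]] ?] [[|[|[|[|[|[|j]]]]]] ?] //= ij;
  first [ by move/(_ 0 isT): ij | by move/(_ 1 isT): ij | by move/(_ 2 isT): ij
        | by move/(_ 3 isT): ij | by move/(_ 4 isT): ij | by move/(_ 5 isT): ij ].
Qed.

Lemma p6_freeP : ~ induced_sub p6_rel e -> p6_free.
Proof.
move=> nop6 p0 p1 p2 p3 p4 p5 e01 e12 e23 e34 e45 n02 n03 n04 n05 n13 n14 n15 n24 n25 n35.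
apply: nop6; pose phi (i : 'I_6) := nth p0 [:: p0; p1; p2; p3; p4; p5] i.
have E := (e01, e12, e23, e34, e45, negbTE n02, negbTE n03, negbTE n04, negbTE n05,
  negbTE n13, negbTE n14, negbTE n15, negbTE n24, negbTE n25, negbTE n35).
have phi_adj a b : e (phi a) (phi b) = p6_rel a b.
  move: a b => [[|[|[|[|[|[|i]]]]]] ?] [[|[|[|[|[|[|j]]]]]] ?] //=;
  rewrite /phi /p6_rel /= ?e_irr //; first [by rewrite E | by rewrite e_sym E].
exists phi; split => // a b ab; apply: p6_rel_twin_free => c.
by rewrite -!phi_adj ab.
Qed.

Lemma card_setU1_le (x : T) (S : {set T}) : #|x |: S| <= #|S|.+1.
Proof. by rewrite cardsU1 -add1n leq_add2r leq_b1. Qed.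

Definition dominated (S : {set T}) (z : T) : bool := (z \in S) || [exists s in S, e z s].

Lemma dominated_adj (S : {set T}) z s : s \in S -> e z s -> dominated S z.
Proof. by move=> sS zs; apply/orP; right; apply/exists_inP; exists s. Qed.

Lemma undominated_neq (S : {set T}) z s : ~~ dominated S z -> s \in S -> z != s.
Proof. by move=> zS sS; apply: contraNneq zS => ->; rewrite /dominated sS. Qed.

Lemma undominated_nadj (S : {set T}) z s : ~~ dominated S z -> s \in S -> ~~ e z s.
Proof. by move=> zS sS; apply: contra zS; exact: dominated_adj. Qed.

Lemma dominatedU1 (S : {set T}) x z :
  dominated (x |: S) z = [|| z == x, e z x | dominated S z].
Proof.
apply/idP/idP.
- case/orP=> [/setU1P[-> | zS] | /exists_inP [s /setU1P[-> -> | sS zs]]];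
    rewrite ?eqxx ?orbT //.
    by rewrite /dominated zS !orbT.
  by rewrite (dominated_adj sS zs) !orbT.
- case/or3P=> [/eqP -> | zx | /orP[zS | /exists_inP [s sS zs]]].
  + by rewrite /dominated setU11.
  + exact: dominated_adj (setU11 x S) zx.
  + by rewrite /dominated setU1r.
  + exact: dominated_adj (setU1r x sS) zs.
Qed.

Lemma undominatedU1 (S : {set T}) x z :
  ~~ dominated (x |: S) z -> [/\ z != x, ~~ e z x & ~~ dominated S z].
Proof. by rewrite dominatedU1; case: (z == x) (e z x) (dominated S z) => [] [] []. Qed.

Lemma dominated_setD1 (S : {set T}) a z :
  dominated S z -> ~~ dominated (S :\ a) z -> (z == a) || e z a.
Proof.
case/orP=> [zS | /exists_inP [s sS zs]] zSa.
  by apply/orP; left; apply: contraNT zSa => za; rewrite /dominated in_setD1 za zS.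
case: (eqVneq s a) => [<- | sa]; first by rewrite zs orbT.
by case/negP: zSa; apply: (dominated_adj (s := s)) => //; rewrite in_setD1 sa sS.
Qed.

(* Here k stands for gamma(G), A + v for a minimum dominating set of G and D'
   for one of G - v. *)
Section CoreCounterexample.
Hypotheses (clawF : claw_free) (p6F : p6_free).
Variables (v : T) (k : nat).
Hypothesis no_small_dom_avoiding_v : forall S : {set T},
  (forall z, dominated S z) -> v \notin S -> #|S| <= k -> False.
Variables (A D' : {set T}).
Hypotheses (vA : v \notin A) (card_A : #|A| < k)
  (A_dom : forall z, z != v -> ~~ e z v -> dominated A z).
Hypotheses (vD' : v \notin D') (card_D' : #|D'| <= k)
  (D'_dom : forall z, z != v -> dominated D' z).

Lemma exists_undominated (S : {set T}) :
  v \notin S -> #|S| <= k -> exists z, ~~ dominated S z.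
Proof.
move=> vS card_S; case: (pickP (fun z => ~~ dominated S z)) => [z | S_dom]; first by exists z.
by case: (no_small_dom_avoiding_v _ vS card_S) => z; apply/negbFE/S_dom.
Qed.

Lemma undominated_A_adj_v z : ~~ dominated A z -> z != v -> e z v.
Proof. by move=> zA zv; apply: contraNT zA; exact: A_dom. Qed.

Lemma A_nadj_v a : a \in A -> ~~ e v a.
Proof.
move=> aA; apply/negP => va.
have undominated_adj_v z : ~~ dominated A z -> e z v.
  move=> zA; apply: (undominated_A_adj_v zA).
  by apply: contraNneq zA => ->; exact: dominated_adj aA va.
have [x xA] := exists_undominated vA (ltnW card_A).
have xv := undominated_adj_v x xA.
have vxA : v \notin x |: A by rewrite in_setU1 negb_or vA eq_sym (adj_neq xv).
have [y] := exists_undominated vxA (leq_trans (card_setU1_le x A) card_A).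
move=> /undominatedU1 [yx nyx yA].
have yv := undominated_adj_v y yA.
apply: (clawF (c := v) (a := a) (b := x) (d := y)) => //; try by rewrite e_sym.
- by rewrite e_sym (undominated_nadj xA aA).
- by rewrite e_sym (undominated_nadj yA aA).
- by rewrite eq_sym (undominated_neq xA aA).
- by rewrite eq_sym (undominated_neq yA aA).
- by rewrite eq_sym.
Qed.

Lemma undominated_nbr_nadj u : e u v ->
  exists y, [/\ e y v, ~~ dominated A y, y != u & ~~ e y u].
Proof.
move=> uv; have vuA : v \notin u |: A by rewrite in_setU1 negb_or vA eq_sym (adj_neq uv).
have [y /undominatedU1 [yu nyu yA]] :=
  exists_undominated vuA (leq_trans (card_setU1_le u A) card_A).
exists y; split=> //; apply: (undominated_A_adj_v yA).
by apply: contraNneq nyu => ->; rewrite e_sym.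
Qed.

Lemma D'_nadj_v d : d \in D' -> ~~ e d v.
Proof.
move=> dD; apply/negP => dv; apply: (no_small_dom_avoiding_v (S := D')) => // z.
case: (eqVneq z v) => [-> | zv]; last exact: D'_dom.
by apply: (dominated_adj dD); rewrite e_sym.
Qed.

Lemma v_nbr_D'_nbr x : e x v -> exists2 d, d \in D' & e x d.
Proof.
move=> xv; case/orP: (D'_dom (adj_neq xv)) => [xD | /exists_inP //].
by move: (D'_nadj_v xD); rewrite xv.
Qed.

Lemma D'_adj_A x d : ~~ dominated A x -> d \in D' -> e x d -> exists2 a, a \in A & e d a.
Proof.
move=> xA dD xd; have dv : d != v by apply: contraNneq vD' => <-.
case/orP: (A_dom dv (D'_nadj_v dD)) => [dA | /exists_inP //].
by move: xA; rewrite (dominated_adj dA xd).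
Qed.

Lemma D'_nadj_other x y d : ~~ dominated A x -> ~~ dominated A y -> ~~ e x y -> x != y ->
  d \in D' -> e x d -> ~~ e d y.
Proof.
move=> xA yA nxy xy dD xd; apply/negP => dy.
have [a aA da] := D'_adj_A xA dD xd.
apply: (clawF (c := d) (a := x) (b := y) (d := a)) => //; try by rewrite e_sym.
- exact: undominated_nadj xA aA.
- exact: undominated_nadj yA aA.
- exact: undominated_neq xA aA.
- exact: undominated_neq yA aA.
Qed.

Lemma private_nbr x d : e x v -> d \in D' -> e x d ->
  exists w, [/\ e w d, w != x, ~~ e w x & ~~ dominated (D' :\ d) w].
Proof.
move=> xv dD xd.
have vS : v \notin x |: (D' :\ d).
  by rewrite in_setU1 negb_or eq_sym (adj_neq xv) in_setD1 (negbTE vD') andbF.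
have card_S : #|x |: (D' :\ d)| <= k.
  by apply: leq_trans (card_setU1_le _ _) _; move: card_D'; rewrite (cardsD1 d D') dD.
have [w /undominatedU1 [wx nwx wD]] := exists_undominated vS card_S.
exists w; split=> //.
have wv : w != v by apply: contraNneq nwx => ->; rewrite e_sym.
case/orP: (dominated_setD1 (D'_dom wv) wD) => [/eqP wd | //].
by move: nwx; rewrite wd e_sym xd.
Qed.

Lemma private_nbr_adj x y dx dy w :
  e x v -> e y v -> ~~ dominated A x -> ~~ dominated A y -> ~~ e x y -> x != y ->
  dx \in D' -> dy \in D' -> e x dx -> e y dy ->
  e w dx -> w != x -> ~~ e w x -> ~~ dominated (D' :\ dx) w ->
  [/\ ~~ e dx y, ~~ e dx dy, e w v & e w y].
Proof.
move=> xv yv xA yA nxy xy dxD dyD xdx ydy wdx wx nwx wD.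
have ndxy := D'_nadj_other xA yA nxy xy dxD xdx.
have ndyx : ~~ e dy x.
  by apply: (D'_nadj_other yA xA) => //; rewrite (e_sym, eq_sym).
have dyD1 : dy \in D' :\ dx.
  by rewrite in_setD1 dyD eq_sym (adj_nadj_neq (y := dy) _ ndyx) // e_sym.
have nwdy := undominated_nadj wD dyD1.
have wdy := undominated_neq wD dyD1.
have ndyv := D'_nadj_v dyD.
have vdy : v != dy by apply: contraNneq vD' => ->.
have ndxdy : ~~ e dx dy.
  apply/negP => dxdy; apply: (clawF (c := dx) (a := x) (b := w) (d := dy)) => //;
    try by rewrite (e_sym, eq_sym).
  exact: adj_nadj_neq xv ndyv.
have wv : e w v.
  apply/negPn/negP => nwv.
  have nwy : ~~ e w y.
    apply/negP => wy; apply: (clawF (c := y) (a := v) (b := w) (d := dy)) => //;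
      try by rewrite (e_sym, eq_sym).
    by apply: (adj_nadj_neq (z := x)); rewrite // e_sym.
  apply: (p6F (p0 := w) (p1 := dx) (p2 := x) (p3 := v) (p4 := y) (p5 := dy)) => //;
    try by rewrite (e_sym, eq_sym).
  exact: D'_nadj_v.
split=> //; apply/negPn/negP => nwy.
apply: (clawF (c := v) (a := x) (b := y) (d := w)) => //; try by rewrite (e_sym, eq_sym).
by rewrite eq_sym (adj_nadj_neq wdx) // e_sym.
Qed.

(* Exchange a for x and y in A: the set (A :\ a) + x + y misses some vertex z. *)
Lemma exchange_nbr a x y : a \in A -> e x v -> e y v -> ~~ e x y -> x != y -> e y a ->
  exists z, [/\ e z a, ~~ e z x, ~~ e z y, z != x & z != y].
Proof.
move=> aA xv yv nxy xy ya.
have vS : v \notin x |: (y |: (A :\ a)).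
  by rewrite !in_setU1 in_setD1 (negbTE vA) andbF !negb_or !(eq_sym v) !adj_neq.
have card_S : #|x |: (y |: (A :\ a))| <= k.
  move: card_A; rewrite (cardsD1 a A) aA add1n => card_Aa.
  apply: leq_trans (card_setU1_le _ _) _; apply: leq_trans card_Aa.
  by rewrite ltnS card_setU1_le.
have [z /undominatedU1 [zx nzx /undominatedU1 [zy nzy zA]]] := exists_undominated vS card_S.
exists z; split=> //.
have zv : z != v by rewrite eq_sym (adj_nadj_neq (z := x)) // e_sym.
have nzv : ~~ e z v.
  apply/negP => zv'; apply: (clawF (c := v) (a := x) (b := y) (d := z)) => //;
    try by rewrite (e_sym, eq_sym).
case/orP: (dominated_setD1 (A_dom zv nzv) zA) => [/eqP za | //].
by move: nzy; rewrite za e_sym ya.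
Qed.

Lemma nbrs_nadj_absurd a w w' : a \in A -> e w v -> e w' v -> e w a -> e w' a ->
  ~~ e w w' -> w != w' -> False.
Proof.
move=> aA wv w'v wa w'a nww' ww'.
have [z [za nzw nzw' zw zw']] := exchange_nbr aA wv w'v nww' ww' w'a.
by apply: (clawF (c := a) (a := w) (b := w') (d := z)) => //; rewrite (e_sym, eq_sym).
Qed.

Lemma nbrs_adj_absurd a x w w' dx : a \in A -> dx \in D' ->
  e x v -> e w v -> e w' v -> e x dx -> e w dx -> e dx a -> e w a -> e w' a ->
  ~~ e x w -> x != w -> ~~ e w' dx -> e w' x -> e w w' -> False.
Proof.
move=> aA dxD xv wv w'v xdx wdx dxa wa w'a nxw xw nw'dx w'x ww'.
have [z [za nzx nzw zx zw]] := exchange_nbr aA xv wv nxw xw wa.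
have nzdx : ~~ e z dx.
  apply/negP => zdx; apply: (clawF (c := dx) (a := x) (b := w) (d := z)) => //;
    try by rewrite (e_sym, eq_sym).
have zw' : e z w'.
  apply/negPn/negP => nzw'; apply: (clawF (c := a) (a := z) (b := w') (d := dx)) => //;
    try by rewrite (e_sym, eq_sym).
  - by rewrite eq_sym (adj_nadj_neq w'x).
  - by rewrite eq_sym (adj_nadj_neq (z := x)) // e_sym.
  - by rewrite (adj_nadj_neq w'v) // D'_nadj_v.
by apply: (clawF (c := w') (a := x) (b := z) (d := w)) => //; try by rewrite (e_sym, eq_sym).
Qed.

Lemma core_counterexample_absurd u : e v u -> False.
Proof.
move=> vu; have uv : e u v by rewrite e_sym.
have [x [xv xA _ _]] := undominated_nbr_nadj uv.
have [y [yv yA yx nyx]] := undominated_nbr_nadj xv.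
have [nxy xy] : ~~ e x y /\ x != y by rewrite e_sym eq_sym.
have [dx dxD xdx] := v_nbr_D'_nbr xv.
have [dy dyD ydy] := v_nbr_D'_nbr yv.
have [w [wdx wx nwx wD]] := private_nbr xv dxD xdx.
have [w' [w'dy w'y nw'y w'D]] := private_nbr yv dyD ydy.
have [ndxy ndxdy wv wy] :=
  private_nbr_adj xv yv xA yA nxy xy dxD dyD xdx ydy wdx wx nwx wD.
have [ndyx _ w'v w'x] :=
  private_nbr_adj yv xv yA xA nyx yx dyD dxD ydy xdx w'dy w'y nw'y w'D.
have [a aA dxa] := D'_adj_A xA dxD xdx.
have nva := A_nadj_v aA.
have [nxa nya] := (undominated_nadj xA aA, undominated_nadj yA aA).
have wa : e w a.
  apply/negPn/negP => nwa; apply: (clawF (c := dx) (a := x) (b := w) (d := a)) => //;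
    try by rewrite (e_sym, eq_sym).
  - exact: undominated_neq xA aA.
  - by rewrite (adj_nadj_neq wv) // e_sym.
have ady : e a dy.
  apply/negPn/negP => nady.
  apply: (p6F (p0 := a) (p1 := dx) (p2 := x) (p3 := v) (p4 := y) (p5 := dy)) => //;
    try by rewrite (e_sym, eq_sym).
  - exact: D'_nadj_v.
  - by rewrite e_sym D'_nadj_v.
have w'a : e w' a.
  apply/negPn/negP => nw'a; apply: (clawF (c := dy) (a := y) (b := w') (d := a)) => //;
    try by rewrite (e_sym, eq_sym).
  - exact: undominated_neq yA aA.
  - by rewrite (adj_nadj_neq w'v) // e_sym.
have dxD1 : dx \in D' :\ dy by rewrite in_setD1 dxD (adj_nadj_neq (z := x)) // e_sym.
have nw'dx := undominated_nadj w'D dxD1.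
have ww' : w != w' by rewrite (adj_nadj_neq wdx).
case: (boolP (e w w')) => [ww'E | nww'].
- by apply: (nbrs_adj_absurd aA dxD xv wv w'v xdx wdx dxa wa w'a) => //;
    rewrite (e_sym, eq_sym).
- exact: (nbrs_nadj_absurd aA wv w'v wa w'a).
Qed.

End CoreCounterexample.
End Graph.

Section Core.
Variables (T : finType) (e : rel T).

Lemma dominatesTP (D : {set T}) :
  reflect (forall z, dominated e D z) (dominates e [set: T] D).
Proof.
by rewrite /dominates subsetT; apply: (iffP forall_inP) => [D_dom z | D_dom z _];
  exact: D_dom.
Qed.

Lemma dominates_setC1P (v : T) (D : {set T}) :
  reflect (v \notin D /\ forall z, z != v -> dominated e D z) (dominates e [set~ v] D).
Proof.
rewrite /dominates subsetC sub1set inE.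
apply: (iffP andP) => [[vD /forall_inP D_dom] | [vD D_dom]].
  by split=> // z zv; apply: D_dom; rewrite !inE.
by split=> //; apply/forall_inP => z; rewrite !inE; exact: D_dom.
Qed.

Lemma core_mem (v : T) (D : {set T}) :
  v \in core e -> dominates e [set: T] D -> #|D| <= gamma e -> v \in D.
Proof.
rewrite inE => /forallP /(_ D) /implyP v_mds D_dom card_D; apply: v_mds.
by rewrite /is_mds D_dom eqn_leq card_D dom_num_le.
Qed.

Lemma core_of_gamma_lt_gamma_del (v : T) : gamma e < gamma_del e v -> v \in core e.
Proof.
move=> lt_gamma; rewrite inE; apply/forallP => D; apply/implyP.
case/andP=> D_dom /eqP card_D; apply: contraLR lt_gamma => vD.
rewrite -leqNgt -card_D; apply: dom_num_le; apply/dominates_setC1P; split=> // z _.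
exact: (dominatesTP _ D_dom).
Qed.

Lemma connected_exists_nbr (v : T) : connected_graph e -> 1 < #|T| -> exists u, e v u.
Proof.
move=> e_conn /card_gt1P [x [y [_ _ xy]]].
have [t tv] : exists t, t != v.
  by case: (eqVneq x v) => [xv | ]; [exists y; rewrite -xv eq_sym | exists x].
case/connectP: (e_conn v t) => [[| u p] /= path_p t_last].
  by rewrite t_last eqxx in tv.
by exists u; case/andP: path_p.
Qed.

End Core.

Theorem proposition4 (T : finType) (e : rel T) :
  simple_graph e ->
  connected_graph e ->
  1 < #|T| ->
  ~ induced_sub claw_rel e ->
  ~ induced_sub p6_rel e ->
  forall v : T, (v \in core e) <-> gamma e < gamma_del e v.
Proof.
move=> [e_sym e_irr] e_conn card_T noclaw nop6 v.
split; last exact: core_of_gamma_lt_gamma_del.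
move=> v_core; rewrite ltnNge; apply/negP => le_del.
have [u vu] := connected_exists_nbr v e_conn card_T.
have [D D_dom card_D] := dom_num_attained e [set: T].
have vD : v \in D by apply: core_mem v_core D_dom _; rewrite card_D.
have [D' /dominates_setC1P [vD' D'_dom] card_D'] := dom_num_attained e [set~ v].
apply: (core_counterexample_absurd e_sym e_irr (claw_freeP e_sym e_irr noclaw)
  (p6_freeP e_sym e_irr nop6) (k := gamma e) (A := D :\ v) _ _ _ _ vD' _ D'_dom vu).
- move=> S /dominatesTP S_dom vS card_S.
  by move: vS; rewrite (core_mem v_core S_dom card_S).
- by rewrite setD11.
- by rewrite /gamma -card_D (cardsD1 v D) vD.
- move=> z zv nzv; apply: (contraNT (dominated_setD1 ((dominatesTP _ _ D_dom) z))).
  by rewrite negb_or zv.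
- by rewrite card_D'.
Qed.
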